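(* Let $G=(V,E)$ be a connected graph with $n=|V|$ nodes and let $\mathbf{A}\in\mathbb{R}^{n\times n}$ be a graph shift operator for $G$. Let $\mathbf{W}\in\mathbb{R}^{c\times c}$, $\mathbf{B}\in\mathbb{R}^{c'\times c}$, inputs $\mathbf{U}_t\in\mathbb{R}^{n\times c'}$, and consider the recurrence $\mathbf{X}_{t+1}=\mathbf{A}\mathbf{X}_t\mathbf{W}+\mathbf{U}_{t+1}\mathbf{B}$, $\mathbf{X}_t\in\mathbb{R}^{n\times c}$. Define the global sensitivity $\mathcal{S}(t-s)=\max_{i,j}\left\|\frac{\partial \mathbf{X}_t^{(i)}}{\partial \mathbf{X}_s^{(j)}}\right\|$. Then for all $s\le t$, $$\frac{\rho(\mathbf{A})^{t-s}}{|V|}\,\|\mathbf{W}^{t-s}\|\le\mathcal{S}(t-s),$$ where $\rho(\mathbf{A})$ is the spectral radius of $\mathbf{A}$. In particular, if $G$ is undirected and $\mathbf{A}=\mathbf{D}^{-1/2}(\tilde{\mathbf{A}}+\mathbf{I})\mathbf{D}^{-1/2}$, with $\tilde{\mathbf{A}}$ the adjacency matrix and $\mathbf{D}$ the diagonal degree matrix of $\tilde{\mathbf{A}}+\mathbf{I}$, then $\frac{1}{|V|}\|\mathbf{W}^{t-s}\|\le\mathcal{S}(t-s)$.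
   Context: $\mathbf{X}_t^{(i)}\in\mathbb{R}^{1\times c}$ denotes the $i$-th row of $\mathbf{X}_t$, regarded as a function of $\mathbf{X}_s$ through the recurrence with inputs held fixed; the Jacobian of row vectors is the $c\times c$ matrix with $(p,q)$ entry $\partial y_p/\partial x_q$. $\|\cdot\|$ denotes the spectral norm and the maximum is over all pairs of nodes $i,j$. *)

From HB Require Import structures.
From mathcomp Require Import all_boot all_order all_algebra.
From mathcomp Require Import all_classical all_reals all_analysis.
From mathcomp Require Import complex.
Set Implicit Arguments. Unset Strict Implicit. Unset Printing Implicit Defensive.
Import Order.TTheory GRing.Theory Num.Theory.
Local Open Scope ring_scope.
Local Open Scope classical_set_scope.

Section Defs.
Variable R : realType.

Definition graph_connected (n : nat) (e : rel 'I_n) : Prop :=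
  forall i j : 'I_n, connect (fun x y => e x y || e y x) i j.

Definition undirected (n : nat) (e : rel 'I_n) : Prop :=
  (forall i j, e i j = e j i) /\ (forall i, ~~ e i i).

Definition is_GSO (n : nat) (e : rel 'I_n) (A : 'M[R]_n) : Prop :=
  forall i j : 'I_n, A i j != 0 -> (i = j) \/ e i j.

Definition adjmx (n : nat) (e : rel 'I_n) : 'M[R]_n :=
  \matrix_(i, j) (e i j)%:R.

Definition sym_norm_adj (n : nat) (e : rel 'I_n) : 'M[R]_n :=
  let AI := adjmx e + 1%:M in
  let Dmhalf := diag_mx (\row_i (Num.sqrt (\sum_j AI i j))^-1) in
  Dmhalf *m AI *m Dmhalf.

Definition enorm (c : nat) (x : 'cV[R]_c) : R := Num.sqrt (\sum_i x i 0 ^+ 2).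

Definition specnorm (p q : nat) (M : 'M[R]_(p, q)) : R :=
  sup [set enorm (M *m x) | x in [set x : 'cV[R]_q | enorm x = 1]].

Definition cmod (z : complex.complex (R : rcfType)) : R :=
  Num.sqrt (complex.Re z ^+ 2 + complex.Im z ^+ 2).

Definition specrad (n : nat) (A : 'M[R]_n) : R :=
  sup [set cmod l | l in [set l : complex.complex (R : rcfType) |
         eigenvalue (map_mx (fun x : R => complex.real_complex (R : rcfType) x) A) l]].

(* matrix power for possibly-empty square matrices *)
Definition mxpow (c : nat) (W : 'M[R]_c) (k : nat) : 'M[R]_c :=
  iter k (fun M => M *m W) 1%:M.

(* evol A W B U s Xs k = X_{s+k}, given X_s = Xs and inputs U held fixed *)
Fixpoint evol (n c c' : nat) (A : 'M[R]_n) (W : 'M[R]_c) (B : 'M[R]_(c', c))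
  (U : nat -> 'M[R]_(n, c')) (s : nat) (Xs : 'M[R]_(n, c)) (k : nat) : 'M[R]_(n, c) :=
  match k with
  | 0 => Xs
  | k'.+1 => A *m evol A W B U s Xs k' *m W + U (s + k').+1 *m B
  end.

Definition row_jacobian (n c c' : nat) (A : 'M[R]_n) (W : 'M[R]_c) (B : 'M[R]_(c', c))
  (U : nat -> 'M[R]_(n, c')) (s t : nat) (Xs : 'M[R]_(n, c)) (i j : 'I_n) : 'M[R]_c :=
  \matrix_(p, q)
     (derive1 (fun h : R => evol A W B U s (Xs + h *: delta_mx j q) (t - s) i p) 0).

Definition sensitivity (n c c' : nat) (A : 'M[R]_n) (W : 'M[R]_c) (B : 'M[R]_(c', c))
  (U : nat -> 'M[R]_(n, c')) (s t : nat) (Xs : 'M[R]_(n, c)) : R :=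
  \big[Num.max/0]_(ij : 'I_n * 'I_n)
     specnorm (row_jacobian A W B U s t Xs ij.1 ij.2).

End Defs.

(* Since the recurrence is affine in [X_s], [X_(s+k)] is [A^k X_s W^k] plus terms
   that do not depend on [X_s].  Hence the Jacobian of row [i] of [X_t] with respect
   to row [j] of [X_s] is [(A^k)_(ij) (W^k)^T], and since the spectral norm is
   invariant under transposition, [S(k) = max_(ij) |(A^k)_(ij)| * ||W^k||] exactly.
   It remains to bound the max-entry norm of [A^k] from below.  Summing the
   coordinates of an eigen-equation [v M = mu v] gives [|mu| <= n max_(ij) |M_(ij)|];
   applied to the eigenvalue [lambda^k] of [A^k] this gives [rho(A)^k <= n |A^k|].
   For the normalized adjacency matrix, the vector [D^(1/2) 1] is fixed, so [1] is an
   eigenvalue of every power and [1 <= n |A^k|]. *)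

From HB Require Import structures.
From mathcomp Require Import all_boot all_order all_algebra.
From mathcomp Require Import all_classical all_reals all_analysis.
From mathcomp Require Import ring lra complex.
Import Order.TTheory GRing.Theory Num.Theory.
Local Open Scope ring_scope.
Local Open Scope classical_set_scope.
Set Implicit Arguments. Unset Strict Implicit. Unset Printing Implicit Defensive.

Lemma eigenvector_norm_le (C : numFieldType) (n : nat) (M : 'M[C]_n)
    (v : 'rV[C]_n) (l m : C) :
  v != 0 -> v *m M = l *: v -> (forall i j, `|M i j| <= m) -> `|l| <= n%:R * m.
Proof.
move=> v_neq0 vM Mm; set S := \sum_j `|v 0 j|.
have S_gt0 : 0 < S.
  rewrite lt_def sumr_ge0 // andbT; apply: contraNneq v_neq0 => /psumr_eq0P v0.
  by apply/eqP/rowP => j; rewrite mxE; apply/normr0_eq0/v0.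
have coord_le j : `|l| * `|v 0 j| <= S * m.
  have := congr1 (fun N : 'rV_n => N 0 j) vM; rewrite !mxE -normrM => <-.
  rewrite mulr_suml.
  apply: le_trans (ler_norm_sum _ _ _) (ler_sum _ _) => i _.
  by rewrite normrM ler_wpM2l.
have : `|l| * S <= n%:R * m * S.
  have -> : n%:R * m * S = \sum_(j < n) S * m.
    by rewrite sumr_const card_ord -mulr_natl; ring.
  by rewrite mulr_sumr; apply: ler_sum.
by rewrite ler_pM2r.
Qed.

Lemma entry_le_mx_norm (K : realDomainType) (p q : nat) (M : 'M[K]_(p, q)) i j :
  `|M i j| <= `|M|.
Proof.
rewrite [`|M|]mx_normrE.
exact: (le_bigmax 0 (fun ij : 'I_p * 'I_q => `|M ij.1 ij.2|) (i, j)).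
Qed.

Lemma sup_exprn_le (R : realType) (E : set R) (k : nat) (K : R) :
  (0 < k)%N -> 0 <= K -> (forall x, E x -> 0 <= x /\ x ^+ k <= K) ->
  sup E ^+ k <= K.
Proof.
move=> k_gt0 K_ge0 EK; set b := K `^ k%:R^-1.
have b_ge0 : 0 <= b by exact: powR_ge0.
have bK : b ^+ k = K.
  rewrite -powR_mulrn // -powRrM mulVf ?powRr1 //.
  by rewrite pnatr_eq0 -lt0n.
have Eb x : E x -> 0 <= x <= b.
  by case/EK=> x0 xK; rewrite x0 -(ler_pXn2r k_gt0) ?nnegrE ?bK.
have [->|/set0P[x Ex]] := eqVneq E set0; first by rewrite sup0 expr0n gtn_eqF.
rewrite -bK lerXn2r ?nnegrE //.
- have Eub : has_ubound E by exists b => y /Eb /andP[].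
  by apply: le_trans (ub_le_sup Eub Ex); case/andP: (Eb x Ex).
- by apply: ge_sup; [exists x | move=> y /Eb /andP[]].
Qed.

Section MatrixPower.
Variable R : realType.

Lemma mxpowSl (c : nat) (W : 'M[R]_c) k : mxpow W k.+1 = W *m mxpow W k.
Proof.
elim: k => [|k IHk]; first by rewrite -[mxpow W 1]/(1%:M *m W) mul1mx mulmx1.
by rewrite -[mxpow W k.+2]/(mxpow W k.+1 *m W) {1}IHk -mulmxA.
Qed.

Lemma mxpow_fixed (c : nat) (W : 'M[R]_c) (w : 'cV[R]_c) k :
  W *m w = w -> mxpow W k *m w = w.
Proof.
by move=> Ww; elim: k => [|k IHk]; rewrite ?mul1mx // -mulmxA Ww.
Qed.

Lemma eigen_map_mxpow (C : nzRingType) (f : {rmorphism R -> C}) (c : nat)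
    (W : 'M[R]_c) (v : 'rV[C]_c) (l : C) k :
  v *m map_mx f W = l *: v -> v *m map_mx f (mxpow W k) = l ^+ k *: v.
Proof.
move=> vW; elim: k => [|k IHk]; first by rewrite map_mx1 mulmx1 scale1r.
by rewrite [mxpow _ _]/= map_mxM mulmxA IHk -scalemxAl vW scalerA exprSr.
Qed.

End MatrixPower.

Section SpectralNorm.
Variable R : realType.

Lemma enorm_ge0 (c : nat) (x : 'cV[R]_c) : 0 <= enorm x.
Proof. exact: sqrtr_ge0. Qed.

Lemma enorm_sqr (c : nat) (x : 'cV[R]_c) : enorm x ^+ 2 = \sum_i x i 0 ^+ 2.
Proof. by rewrite sqr_sqrtr // sumr_ge0 // => i _; rewrite sqr_ge0. Qed.

Lemma enorm0 (c : nat) : enorm (0 : 'cV[R]_c) = 0.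
Proof. by rewrite /enorm big1 ?sqrtr0 // => i _; rewrite mxE expr0n. Qed.

Lemma enormZ (c : nat) (a : R) (x : 'cV[R]_c) : enorm (a *: x) = `|a| * enorm x.
Proof.
rewrite /enorm (eq_bigr (fun i => a ^+ 2 * x i 0 ^+ 2)) => [|i _]; last first.
  by rewrite mxE exprMn.
by rewrite -mulr_sumr sqrtrM ?sqr_ge0 // sqrtr_sqr.
Qed.

Lemma entry_le_enorm (c : nat) (x : 'cV[R]_c) i : `|x i 0| <= enorm x.
Proof.
rewrite -sqrtr_sqr ler_wsqrtr // (bigD1 i) //= lerDl sumr_ge0 // => j _.
exact: sqr_ge0.
Qed.

Lemma enorm_eq0 (c : nat) (x : 'cV[R]_c) : enorm x = 0 -> x = 0.
Proof.
move=> x0; apply/matrixP => i j; rewrite (ord1 j) mxE; apply/normr0_eq0.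
by apply/eqP; rewrite eq_le normr_ge0 -x0 entry_le_enorm.
Qed.

Lemma dot_le_enorm (c : nat) (x z : 'cV[R]_c) :
  enorm x = 1 -> `|\sum_i x i 0 * z i 0| <= enorm z.
Proof.
move=> x1; set d := \sum_i x i 0 * z i 0.
(* [z - d x] is orthogonal to the unit vector [x], so its squared length is [|z|^2 - d^2]. *)
have : 0 <= \sum_i (z i 0 - d * x i 0) ^+ 2 by apply: sumr_ge0 => i _; apply: sqr_ge0.
have -> : \sum_i (z i 0 - d * x i 0) ^+ 2
          = \sum_i z i 0 ^+ 2 - 2 * d * d + d ^+ 2 * \sum_i x i 0 ^+ 2.
  rewrite mulr_sumr /d mulr_sumr -sumrB -big_split /=.
  by apply: eq_bigr => i _; ring.
rewrite -!enorm_sqr x1 expr1n mulr1 => d_le.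
rewrite -(@ler_pXn2r _ 2) ?nnegrE ?enorm_ge0 // real_normK ?num_real //.
by rewrite !expr2 in d_le *; lra.
Qed.

Lemma specnorm_set_ubound (p q : nat) (M : 'M[R]_(p, q)) :
  has_ubound [set enorm (M *m x) | x in [set x : 'cV[R]_q | enorm x = 1]].
Proof.
exists (Num.sqrt (p%:R * (q%:R * `|M|) ^+ 2)) => _ [x x1 <-].
apply: ler_wsqrtr.
rewrite (_ : _ * _ = \sum_(i < p) (q%:R * `|M|) ^+ 2); last first.
  by rewrite sumr_const card_ord mulr_natl.
apply: ler_sum => i _; rewrite -real_normK ?num_real //.
apply: lerXn2r; rewrite ?nnegrE ?mulr_ge0 //.
rewrite mxE (_ : _ * _ = \sum_(j < q) `|M|); last first.
  by rewrite sumr_const card_ord mulr_natl.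
apply: le_trans (ler_norm_sum _ _ _) (ler_sum _ _) => j _.
by rewrite normrM -[`|M|]mulr1 ler_pM ?entry_le_mx_norm // -x1 entry_le_enorm.
Qed.

Lemma enorm_le_specnorm (p q : nat) (M : 'M[R]_(p, q)) x :
  enorm x = 1 -> enorm (M *m x) <= specnorm M.
Proof. by move=> x1; apply: (ub_le_sup (specnorm_set_ubound M)); exists x. Qed.

Lemma specnorm_ge0 (p q : nat) (M : 'M[R]_(p, q)) : 0 <= specnorm M.
Proof.
rewrite /specnorm; set E := [set _ | _ in _].
have [->|/set0P[_ [x x1 _]]] := eqVneq E set0; first by rewrite sup0.
exact: le_trans (enorm_ge0 _) (enorm_le_specnorm M x1).
Qed.

Lemma specnorm_le (p q : nat) (M : 'M[R]_(p, q)) b : 0 <= b ->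
  (forall x, enorm x = 1 -> enorm (M *m x) <= b) -> specnorm M <= b.
Proof.
move=> b0 Mb; rewrite /specnorm; set E := [set _ | _ in _].
have [->|/set0P E_neq0] := eqVneq E set0; first by rewrite sup0.
by apply: ge_sup => // _ [x x1 <-]; apply: Mb.
Qed.

Lemma enorm_mulmx_le (p q : nat) (M : 'M[R]_(p, q)) y :
  enorm (M *m y) <= specnorm M * enorm y.
Proof.
have [/enorm_eq0 ->|y_neq0] := eqVneq (enorm y) 0.
  by rewrite mulmx0 !enorm0 mulr0.
have y_gt0 : 0 < enorm y by rewrite lt_def y_neq0 enorm_ge0.
have u1 : enorm ((enorm y)^-1 *: y) = 1.
  by rewrite enormZ ger0_norm ?invr_ge0 ?enorm_ge0 // mulVf.
have := enorm_le_specnorm M u1.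
by rewrite -scalemxAr enormZ ger0_norm ?invr_ge0 ?enorm_ge0 // mulrC ler_pdivrMr.
Qed.

Lemma specnormZ (p q : nat) (a : R) (M : 'M[R]_(p, q)) :
  specnorm (a *: M) = `|a| * specnorm M.
Proof.
have specnormZ_le b (N : 'M[R]_(p, q)) : specnorm (b *: N) <= `|b| * specnorm N.
  apply: specnorm_le => [|x x1]; first by rewrite mulr_ge0 ?specnorm_ge0.
  by rewrite -scalemxAl enormZ ler_wpM2l ?enorm_le_specnorm.
apply/eqP; rewrite eq_le specnormZ_le /=.
have [->|a_neq0] := eqVneq a 0; first by rewrite normr0 mul0r specnorm_ge0.
rewrite -ler_pdivlMl ?normr_gt0 // -normfV.
by rewrite -[X in specnorm X <= _](scale1r M) -(mulVf a_neq0) -scalerA specnormZ_le.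
Qed.

Lemma dot_mulmx_tr (p q : nat) (N : 'M[R]_(p, q)) (x : 'cV[R]_q) (z : 'cV[R]_p) :
  \sum_i (N *m x) i 0 * z i 0 = \sum_j x j 0 * (N^T *m z) j 0.
Proof.
transitivity (((N *m x)^T *m z) 0 0).
  by rewrite [RHS]mxE; apply: eq_bigr => i _; rewrite [in RHS]mxE.
by rewrite trmx_mul -mulmxA [LHS]mxE; apply: eq_bigr => j _; rewrite [in LHS]mxE.
Qed.

Lemma specnorm_tr (p q : nat) (M : 'M[R]_(p, q)) : specnorm M^T = specnorm M.
Proof.
suff specnorm_le_tr r s (N : 'M[R]_(r, s)) : specnorm N <= specnorm N^T.
  by apply/eqP; rewrite eq_le specnorm_le_tr -{2}[M]trmxK specnorm_le_tr.
apply: specnorm_le => [|x x1]; first exact: specnorm_ge0.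
have [->|y_neq0] := eqVneq (enorm (N *m x)) 0; first exact: specnorm_ge0.
have y_gt0 : 0 < enorm (N *m x) by rewrite lt_def y_neq0 enorm_ge0.
have : enorm (N *m x) ^+ 2 <= specnorm N^T * enorm (N *m x).
  rewrite enorm_sqr (eq_bigr _ (fun i _ => expr2 _)) dot_mulmx_tr.
  apply: le_trans (ler_norm _) _.
  exact: le_trans (dot_le_enorm _ x1) (enorm_mulmx_le _ _).
by rewrite expr2 ler_pM2r.
Qed.

End SpectralNorm.

Section Jacobian.
Variable R : realType.

Lemma derive1_affine (a b x : R) : derive1 (fun h : R => a + h * b) x = b.
Proof.
have -> : (fun h : R => a + h * b) = cst a + b \*: id.
  by apply/funext => h /=; rewrite mulrC.
have : is_derive x 1 (cst a + b \*: id) (0 + b *: (1 : R)) by exact: is_deriveD.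
by move=> dx; rewrite derive1E derive_val add0r /GRing.scale /= mulr1.
Qed.

Lemma mul_delta_mxE (m n p : nat) (P : 'M[R]_(m, n)) (Q : 'M[R]_p) i j q r :
  (P *m delta_mx j q *m Q) i r = P i j * Q q r.
Proof.
have Pdelta l : (P *m delta_mx j q) i l = P i j * (l == q)%:R.
  rewrite mxE (bigD1 j) //= big1 ?addr0 => [|k /negbTE kj]; rewrite mxE ?eqxx //.
  by rewrite kj mulr0.
rewrite mxE (bigD1 q) //= big1 ?addr0 => [|l /negbTE lq]; rewrite Pdelta.
  by rewrite eqxx mulr1.
by rewrite lq mulr0 mul0r.
Qed.

Variables (n c c' : nat) (A : 'M[R]_n) (W : 'M[R]_c) (B : 'M[R]_(c', c)).
Variable U : nat -> 'M[R]_(n, c').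

Lemma evolD s Xs Y k :
  evol A W B U s (Xs + Y) k = evol A W B U s Xs k + mxpow A k *m Y *m mxpow W k.
Proof.
elim: k => [|k IHk]; first by rewrite /= mul1mx mulmx1.
rewrite ![evol _ _ _ _ _ _ k.+1]/= IHk mulmxDr mulmxDl addrAC; congr (_ + _).
by rewrite -[mxpow W k.+1]/(mxpow W k *m W) mxpowSl !mulmxA.
Qed.

Lemma row_jacobianE s t Xs i j :
  row_jacobian A W B U s t Xs i j = mxpow A (t - s) i j *: (mxpow W (t - s))^T.
Proof.
apply/matrixP => p q; rewrite !mxE.
under eq_fun => h do rewrite evolD -scalemxAr -scalemxAl mxE [X in _ + X]mxE mul_delta_mxE.
by rewrite derive1_affine.
Qed.

Lemma sensitivityE s t Xs :
  sensitivity A W B U s t Xs = `|mxpow A (t - s)| * specnorm (mxpow W (t - s)).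
Proof.
rewrite /sensitivity [`|_|]mx_normrE.
under eq_bigr => ij _ do rewrite row_jacobianE specnormZ specnorm_tr.
rewrite (big_morph (fun y => y * specnorm (mxpow W (t - s))) (op1 := Num.max) (id1 := 0))
  ?mul0r // => y z.
by rewrite maxr_pMl ?specnorm_ge0.
Qed.

End Jacobian.

Section SpectralRadius.
Variable R : realType.

Lemma normc_real (x : R) : `|x%:C%C| = `|x|%:C%C :> R[i].
Proof. by rewrite normc_def /= expr0n addr0 sqrtr_sqr. Qed.

Lemma specrad_exprn_le (n : nat) (A : 'M[R]_n) k :
  (0 < n)%N -> specrad A ^+ k <= n%:R * `|mxpow A k|.
Proof.
move=> n_gt0; case: k => [|k].
  have := entry_le_mx_norm (mxpow A 0) (Ordinal n_gt0) (Ordinal n_gt0).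
  rewrite mxE eqxx normr1 expr0 => Ak_ge1.
  by apply: le_trans Ak_ge1 _; rewrite ler_peMl ?ler1n.
apply: sup_exprn_le => // _ [l /eigenvalueP[v vA v_neq0] <-].
split; first exact: sqrtr_ge0.
have Ak_entry i j : `|map_mx (real_complex R) (mxpow A k.+1) i j| <= `|mxpow A k.+1|%:C%C.
  by rewrite mxE normc_real lecR entry_le_mx_norm.
have := eigenvector_norm_le v_neq0 (eigen_map_mxpow (f := real_complex R) k.+1 vA) Ak_entry.
by rewrite normrX normc_def -rmorphXn -[n%:R](rmorph_nat (real_complex R)) -rmorphM lecR.
Qed.

End SpectralRadius.

Section NormalizedAdjacency.
Variable R : realType.

Definition sqrt_rowsum (n : nat) (M : 'M[R]_n) : 'cV[R]_n :=
  \col_i Num.sqrt (\sum_j M i j).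

Lemma sym_normalize_sqrt_rowsum (n : nat) (M : 'M[R]_n) :
  (forall i, 0 < \sum_j M i j) ->
  let Dmhalf := diag_mx (\row_i (Num.sqrt (\sum_j M i j))^-1) in
  Dmhalf *m M *m Dmhalf *m sqrt_rowsum M = sqrt_rowsum M.
Proof.
move=> d_gt0 /=; have sqrt_neq0 i : Num.sqrt (\sum_j M i j) != 0.
  by rewrite gt_eqF // sqrtr_gt0.
apply/matrixP => i z; rewrite (ord1 z) !mxE.
under eq_bigr => j _ do rewrite mul_mx_diag mul_diag_mx !mxE mulfVK //.
rewrite -mulr_sumr -[X in _ * X](@sqr_sqrtr _ (\sum_j M i j)) ?ltW //.
by rewrite expr2 mulKf.
Qed.

Lemma rowsum_adjmx_addI_gt0 (n : nat) (e : rel 'I_n) i :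
  0 < \sum_j (adjmx R e + 1%:M) i j.
Proof.
rewrite (bigD1 i) //= ltr_pwDl ?sumr_ge0 // => [|j _]; rewrite !mxE ?eqxx.
  by rewrite ltr_pwDr ?ler0n.
by rewrite addr_ge0 ?ler0n.
Qed.

Lemma one_le_sym_norm_adj_exprn (n : nat) (e : rel 'I_n) k :
  (0 < n)%N -> 1 <= n%:R * `|mxpow (sym_norm_adj R e) k|.
Proof.
move=> n_gt0; set w := sqrt_rowsum (adjmx R e + 1%:M).
have w_neq0 : w^T != 0.
  apply/negP => /eqP/matrixP/(_ 0 (Ordinal n_gt0)); rewrite !mxE => /eqP.
  by rewrite sqrtr_eq0 leNgt rowsum_adjmx_addI_gt0.
have wS : w^T *m (mxpow (sym_norm_adj R e) k)^T = 1 *: w^T.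
  rewrite -trmx_mul mxpow_fixed ?scale1r //.
  exact: sym_normalize_sqrt_rowsum (rowsum_adjmx_addI_gt0 e).
have S_entry i j : `|(mxpow (sym_norm_adj R e) k)^T i j| <= `|mxpow (sym_norm_adj R e) k|.
  by rewrite mxE entry_le_mx_norm.
by have := eigenvector_norm_le w_neq0 wS S_entry; rewrite normr1.
Qed.

End NormalizedAdjacency.

Theorem theorem3p11 (R : realType) (n c c' : nat) (e : rel 'I_n)
  (hn : (0 < n)%N) (hconn : graph_connected e)
  (W : 'M[R]_c) (B : 'M[R]_(c', c)) (U : nat -> 'M[R]_(n, c')) :
  (forall A : 'M[R]_n, is_GSO e A ->
     forall (s t : nat) (Xs : 'M[R]_(n, c)), (s <= t)%N ->
       specrad A ^+ (t - s) / n%:R * specnorm (mxpow W (t - s))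
         <= sensitivity A W B U s t Xs)
  /\
  (undirected e ->
     forall (s t : nat) (Xs : 'M[R]_(n, c)), (s <= t)%N ->
       1 / n%:R * specnorm (mxpow W (t - s))
         <= sensitivity (sym_norm_adj R e) W B U s t Xs).
Proof.
have n_gt0 : 0 < n%:R :> R by rewrite ltr0n.
split=> [A _ s t Xs _ | _ s t Xs _];
  rewrite sensitivityE ler_wpM2r ?specnorm_ge0 // ler_pdivrMr // mulrC.
- exact: specrad_exprn_le.
- exact: one_le_sym_norm_adj_exprn.
Qed.
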